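(* Let $X$ be a simplicial complex with vertex set $V$ and $1$-skeleton $\mathcal G$. Let $\hat d$ be a metric on $V$ that is $(A,B)$-quasi-isometric to $d_{\mathcal G}$ for constants $A\ge1$, $B\ge0$, i.e. $\frac1A d_{\mathcal G}(u,v)-B\le \hat d(u,v)\le A\,d_{\mathcal G}(u,v)+B$ for all $u,v\in V$. Then there is a metric $\tilde d$ on $X$ extending $\hat d$ (namely $\tilde d(x,y)=\min\{\hat D(x,y),3(A+B)d_X(x,y)\}$) such that: (1) if $x,y\in X$ have disjoint supports then $\tilde d(x,y)=\hat D(x,y)$; (2) there is a constant $B'\ge0$ (one may take $B'=2(A+B)$) such that for all $x,y\in X$, \[\hat D(x,y)-B'\le \tilde d(x,y)\le \hat D(x,y)+B'.\]
   Context: Points $x\in X$ have barycentric coordinates $(x_u)_{u\in V}$ (finitely many nonzero, summing to $1$); $\mathrm{supp}(x)=\{u\in V:x_u\neq0\}$. $\hat D(x,y)=\sum_{u,v\in V}x_uy_v\,\hat d(u,v)$ is the bilinear extension of $\hat d$. $d_{\mathcal G}$ is the word metric on the $1$-skeleton (every edge length $1$). For a simplex $\sigma$ and $x,y\in\sigma$, $d_\sigma(x,y)=\tfrac12\sum_{u\in V(\sigma)}|x_u-y_u|$; a path from $x$ to $y$ is a sequence $x=a_0,\dots,a_r=y$ with consecutive points in a common simplex $\sigma_i$, of length $\sum_i d_{\sigma_i}(a_{i-1},a_i)$; the $\ell^1$-path metric $d_X(x,y)$ is the infimum of lengths of such paths. *)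

From Stdlib Require Import Reals Lra List Classical ClassicalEpsilon.
Import ListNotations.
Open Scope R_scope.

Section Defs.
Variable V : Type.
Variable K : list V -> Prop.

Definition simplicial_complex : Prop :=
  (forall v : V, K [v]) /\ (forall s t : list V, K s -> incl t s -> K t).

Definition lsum (s : list V) (f : V -> R) : R :=
  fold_right (fun u acc => f u + acc) 0 s.

Definition fin_supp (x : V -> R) : Prop :=
  exists s : list V, NoDup s /\ forall u, x u <> 0 -> In u s.

Definition supp_list (x : V -> R) : list V :=
  match excluded_middle_informative (fin_supp x) with
  | left H => proj1_sig (constructive_indefinite_description _ H)
  | right _ => nil
  end.

(* x is a point of the geometric realisation X *)
Definition point (x : V -> R) : Prop :=
  (forall u, 0 <= x u) /\
  (exists s, K s /\ forall u, x u <> 0 -> In u s) /\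
  lsum (supp_list x) x = 1.

Definition vtx (v : V) : V -> R :=
  fun u => if excluded_middle_informative (u = v) then 1 else 0.

Definition Dhat (dh : V -> V -> R) (x y : V -> R) : R :=
  lsum (supp_list x) (fun u => lsum (supp_list y) (fun v => x u * y v * dh u v)).

Definition edge (u v : V) : Prop := u <> v /\ K [u; v].

Inductive walk : V -> V -> nat -> Prop :=
| walk_nil u : walk u u 0
| walk_cons u w v n : edge u w -> walk w v n -> walk u v (S n).

Definition graph_dist (u v : V) (n : nat) : Prop :=
  walk u v n /\ forall m, walk u v m -> (n <= m)%nat.

(* l^1 simplex distance, for a duplicate-free vertex list s of a simplex *)
Definition dsig (s : list V) (x y : V -> R) : R :=
  / 2 * lsum s (fun u => Rabs (x u - y u)).

Inductive path_len : (V -> R) -> (V -> R) -> R -> Prop :=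
| pl_nil x : point x -> path_len x x 0
| pl_cons x z y s L :
    K s -> NoDup s -> point x -> point z ->
    (forall u, x u <> 0 -> In u s) -> (forall u, z u <> 0 -> In u s) ->
    path_len z y L -> path_len x y (dsig s x z + L).

Definition is_glb (E : R -> Prop) (m : R) : Prop :=
  (forall L, E L -> m <= L) /\ (forall b, (forall L, E L -> b <= L) -> b <= m).

Definition dX_is (x y : V -> R) (r : R) : Prop := is_glb (path_len x y) r.

End Defs.
Arguments simplicial_complex {V}.
Arguments point {V}.
Arguments graph_dist {V}.
Arguments dX_is {V}.
Arguments Dhat {V}.
Arguments vtx {V}.
Arguments lsum {V}.
Arguments supp_list {V}.
Arguments path_len {V}.
Arguments dsig {V}.
Arguments edge {V}.
Arguments walk {V}.

Definition is_metric {P : Type} (dom : P -> Prop) (d : P -> P -> R) : Prop :=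
  (forall x y, dom x -> dom y -> 0 <= d x y) /\
  (forall x y, dom x -> dom y -> (d x y = 0 <-> x = y)) /\
  (forall x y, dom x -> dom y -> d x y = d y x) /\
  (forall x y z, dom x -> dom y -> dom z -> d x z <= d x y + d y z).

(* A point x of X acts on functions g : V -> R by barycentric averaging,
   bary x g = sum_u x_u g(u).  If g oscillates by at most M on every simplex,
   one step of a simplicial path changes bary _ g by at most M times the
   l^1 step length; hence bary _ g is M-Lipschitz for the path metric d_X.
   Three choices of g give everything we need about d_X and Dhat:
   coordinate functions (d_X separates points), the indicator of supp(x)
   (d_X >= 1 between points with disjoint supports) and u |-> Dhat x (vtx u)
   (Dhat is C-Lipschitz in each argument, C bounding dh on simplices).
   Dhat itself is symmetric, satisfies the triangle inequality and vanishes
   only at pairs of equal vertices, but Dhat x x may be positive.  An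
   abstract lemma shows that min(D, c d) is a metric whenever d is a metric,
   D is such a "semi-metric" and D is L-Lipschitz w.r.t. d with L <= c.
   The theorem follows with C = A + B, c = 3C: the quasi-isometry bound makes
   the 1-skeleton connected (so d_X is a real infimum) and bounds dh by A + B
   on each simplex. *)

From Stdlib Require Import Reals Lra List Classical ClassicalEpsilon FunctionalExtensionality.
Import ListNotations.
Open Scope R_scope.
Set Implicit Arguments.

Section ListSums.
Variable V : Type.

Lemma lsum_nil (f : V -> R) : lsum [] f = 0.
Proof. reflexivity. Qed.

Lemma lsum_cons a s (f : V -> R) : lsum (a :: s) f = f a + lsum s f.
Proof. reflexivity. Qed.

Lemma lsum_app s t (f : V -> R) : lsum (s ++ t) f = lsum s f + lsum t f.
Proof.
  induction s as [|a s IH]; simpl app.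
  - rewrite lsum_nil; ring.
  - rewrite !lsum_cons, IH; ring.
Qed.

Lemma lsum_ext s (f g : V -> R) :
  (forall u, In u s -> f u = g u) -> lsum s f = lsum s g.
Proof.
  induction s as [|a s IH]; intros H; [reflexivity|].
  rewrite !lsum_cons, H, IH; simpl; auto.
  intros; apply H; simpl; auto.
Qed.

Lemma lsum_plus s (f g : V -> R) :
  lsum s (fun u => f u + g u) = lsum s f + lsum s g.
Proof. induction s as [|a s IH]; [simpl; ring|]. rewrite !lsum_cons, IH; ring. Qed.

Lemma lsum_scal s c (f : V -> R) : lsum s (fun u => c * f u) = c * lsum s f.
Proof. induction s as [|a s IH]; [simpl; ring|]. rewrite !lsum_cons, IH; ring. Qed.

Lemma lsum_scalr s c (f : V -> R) : lsum s (fun u => f u * c) = lsum s f * c.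
Proof. induction s as [|a s IH]; [simpl; ring|]. rewrite !lsum_cons, IH; ring. Qed.

Lemma lsum_le s (f g : V -> R) :
  (forall u, In u s -> f u <= g u) -> lsum s f <= lsum s g.
Proof.
  induction s as [|a s IH]; intros H; [simpl; lra|].
  rewrite !lsum_cons. apply Rplus_le_compat; [|apply IH]; intros; apply H; simpl; auto.
Qed.

Lemma lsum_zero s (f : V -> R) : (forall u, In u s -> f u = 0) -> lsum s f = 0.
Proof.
  induction s as [|a s IH]; intros H; [reflexivity|].
  rewrite lsum_cons, H, IH; [ring| |simpl; auto].
  intros; apply H; simpl; auto.
Qed.

Lemma lsum_nonneg s (f : V -> R) : (forall u, In u s -> 0 <= f u) -> 0 <= lsum s f.
Proof.
  intros H. rewrite <- (lsum_zero s (fun _ => 0)) by auto. now apply lsum_le.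
Qed.

Lemma lsum_abs s (f : V -> R) : Rabs (lsum s f) <= lsum s (fun u => Rabs (f u)).
Proof.
  induction s as [|a s IH]; [simpl; rewrite Rabs_R0; lra|].
  rewrite !lsum_cons. eapply Rle_trans; [apply Rabs_triang|lra].
Qed.

Lemma lsum_swap s t (F : V -> V -> R) :
  lsum s (fun u => lsum t (fun v => F u v)) = lsum t (fun v => lsum s (fun u => F u v)).
Proof.
  induction s as [|a s IH]; [simpl; symmetry; now apply lsum_zero|].
  rewrite lsum_cons, IH, <- lsum_plus. apply lsum_ext; reflexivity.
Qed.

Lemma lsum_zero_each s (f : V -> R) :
  (forall u, In u s -> 0 <= f u) -> lsum s f = 0 -> forall u, In u s -> f u = 0.
Proof.
  induction s as [|a s IH]; intros H E u Hu; [destruct Hu|].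
  rewrite lsum_cons in E.
  assert (0 <= f a) by (apply H; simpl; auto).
  assert (0 <= lsum s f) by (apply lsum_nonneg; intros; apply H; simpl; auto).
  destruct Hu as [<-|Hu]; [lra|].
  apply IH; auto; [intros; apply H; simpl; auto | lra].
Qed.

Lemma lsum_nonzero s (f : V -> R) : lsum s f <> 0 -> exists u, In u s /\ f u <> 0.
Proof.
  intros H. apply NNPP; intro C. apply H, lsum_zero.
  intros u Hu. apply NNPP; intro D. eauto.
Qed.

Lemma lsum_same_support s : forall t (f : V -> R), NoDup s -> NoDup t ->
  (forall u, f u <> 0 -> (In u s <-> In u t)) -> lsum s f = lsum t f.
Proof.
  induction s as [|a s IH]; intros t f Ns Nt H.
  - symmetry. apply lsum_zero. intros u Hu. apply NNPP; intro C.
    exact (proj2 (H u C) Hu).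
  - inversion Ns as [|? ? Na Ns']; subst. rewrite lsum_cons.
    destruct (Req_dec (f a) 0) as [Fa|Fa].
    + rewrite Fa, Rplus_0_l. apply IH; auto. intros u Fu. rewrite <- (H u Fu).
      split; [simpl; auto|]. intros [<-|?]; [contradiction|auto].
    + assert (Ha : In a t) by (apply H; simpl; auto).
      destruct (in_split _ _ Ha) as [t1 [t2 ->]].
      pose proof (NoDup_remove_2 _ _ _ Nt) as Nat.
      rewrite lsum_app, lsum_cons, (IH (t1 ++ t2)), lsum_app; [ring|auto| |].
      { eapply NoDup_remove_1; eauto. }
      intros u Fu. specialize (H u Fu). rewrite in_app_iff in *. simpl in H.
      split; intros Hu.
      * assert (u <> a) by (intros ->; contradiction).
        destruct (proj1 H (or_intror Hu)) as [?|[?|?]]; auto; congruence.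
      * assert (u <> a) by (intros ->; contradiction).
        destruct (proj2 H ltac:(destruct Hu; auto)); auto; congruence.
Qed.

Lemma lsum_indep s t (f : V -> R) : NoDup s -> NoDup t ->
  (forall u, f u <> 0 -> In u s) -> (forall u, f u <> 0 -> In u t) ->
  lsum s f = lsum t f.
Proof. intros. apply lsum_same_support; auto. intros u Fu; split; auto. Qed.

End ListSums.

Section Points.
Variable V : Type.
Variable K : list V -> Prop.
Hypothesis HK : simplicial_complex K.

Lemma point_nonneg x u : point K x -> 0 <= x u.
Proof. intros [H _]; apply H. Qed.

Lemma point_simplex x : point K x ->
  exists s, K s /\ NoDup s /\ forall u, x u <> 0 -> In u s.
Proof.
  intros [_ [[s [Ks Hs]] _]].
  pose (deq := fun a b : V => excluded_middle_informative (a = b)).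
  exists (nodup deq s). repeat split.
  - apply (proj2 HK s); auto. intros u; rewrite nodup_In; auto.
  - apply NoDup_nodup.
  - intros u Hu; rewrite nodup_In; auto.
Qed.

Lemma supp_list_spec x : point K x ->
  NoDup (supp_list x) /\ forall u, x u <> 0 -> In u (supp_list x).
Proof.
  intros P. assert (F : fin_supp V x).
  { destruct (point_simplex P) as [s [_ [N H]]]. exists s; auto. }
  unfold supp_list. destruct excluded_middle_informative as [H'|H']; [|contradiction].
  destruct constructive_indefinite_description as [s Hs]. exact Hs.
Qed.

Lemma point_sum x s : point K x -> NoDup s -> (forall u, x u <> 0 -> In u s) ->
  lsum s x = 1.
Proof.
  intros P N H. destruct (supp_list_spec P) as [N' H'].
  rewrite <- (proj2 (proj2 P)). apply lsum_indep; auto.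
Qed.

Lemma point_supp_nonempty x : point K x -> exists u, x u <> 0.
Proof.
  intros P. destruct (supp_list_spec P) as [N H].
  pose proof (point_sum P N H).
  destruct (lsum_nonzero (supp_list x) x) as [u [_ Hu]]; [lra|eauto].
Qed.

Definition bary (x g : V -> R) : R := lsum (supp_list x) (fun w => x w * g w).

Lemma bary_lists x s g : point K x -> NoDup s -> (forall u, x u <> 0 -> In u s) ->
  bary x g = lsum s (fun w => x w * g w).
Proof.
  intros P N H. destruct (supp_list_spec P) as [N' H'].
  apply lsum_indep; auto; intros u Hu; [apply H'|apply H];
    intro E; apply Hu; rewrite E; ring.
Qed.

Lemma vtx_supp (u w : V) : vtx u w <> 0 -> w = u.
Proof. unfold vtx. destruct excluded_middle_informative; [auto|lra]. Qed.

Lemma vtx_self (u : V) : vtx u u = 1.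
Proof. unfold vtx. destruct excluded_middle_informative; congruence. Qed.

Lemma vtx_range (u w : V) : 0 <= vtx u w <= 1.
Proof. unfold vtx. destruct excluded_middle_informative; lra. Qed.

Lemma NoDup_single (u : V) : NoDup [u].
Proof. constructor; [intros []|constructor]. Qed.

Lemma vtx_supp_single (u : V) : forall w, vtx u w <> 0 -> In w [u].
Proof. intros w Hw. left. symmetry. now apply vtx_supp. Qed.

Lemma vtx_point (u : V) : point K (vtx u).
Proof.
  split; [|split].
  - intros w; apply vtx_range.
  - exists [u]. split; [apply (proj1 HK)|apply vtx_supp_single].
  - assert (F : fin_supp V (vtx u)) by (exists [u]; split; [apply NoDup_single|apply vtx_supp_single]).
    unfold supp_list. destruct excluded_middle_informative as [H|H]; [|contradiction].
    destruct constructive_indefinite_description as [s [N Hs]]. simpl.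
    rewrite (lsum_indep (s:=s) (t:=[u])); auto using NoDup_single, vtx_supp_single.
    rewrite lsum_cons, lsum_nil, vtx_self. ring.
Qed.

Lemma bary_const x c : point K x -> bary x (fun _ => c) = c.
Proof.
  intros P. destruct (supp_list_spec P) as [N H]. unfold bary.
  now rewrite lsum_scalr, (point_sum P N H), Rmult_1_l.
Qed.

Lemma bary_plus x g h : bary x (fun w => g w + h w) = bary x g + bary x h.
Proof. unfold bary. rewrite <- lsum_plus. apply lsum_ext; intros; ring. Qed.

Lemma bary_ext x g h : (forall w, g w = h w) -> bary x g = bary x h.
Proof. intros H. apply lsum_ext. intros w _. now rewrite H. Qed.

Lemma bary_le x g h : point K x -> (forall w, x w <> 0 -> g w <= h w) ->
  bary x g <= bary x h.
Proof.
  intros P H. apply lsum_le. intros w _.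
  destruct (Req_dec (x w) 0) as [E|E].
  - rewrite E; lra.
  - apply Rmult_le_compat_l; [apply (point_nonneg w P)|auto].
Qed.

Lemma bary_zero_each x g : point K x -> (forall w, 0 <= g w) -> bary x g = 0 ->
  forall u, x u <> 0 -> g u = 0.
Proof.
  intros P Hg E u Hu. destruct (supp_list_spec P) as [N H].
  assert (T : x u * g u = 0).
  { apply (lsum_zero_each (supp_list x) (fun w => x w * g w)); auto.
    intros w _. apply Rmult_le_pos; [apply (point_nonneg w P)|auto]. }
  destruct (Rmult_integral _ _ T); [contradiction|auto].
Qed.

Lemma bary_at_vtx u g : bary (vtx u) g = g u.
Proof.
  unfold bary. destruct (supp_list_spec (vtx_point u)) as [N H].
  rewrite (lsum_indep (t:=[u])); auto using NoDup_single.
  - rewrite lsum_cons, lsum_nil, vtx_self. ring.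
  - intros w Hw. apply H. intro E; apply Hw; rewrite E; ring.
  - intros w Hw. apply vtx_supp_single. intro E; apply Hw; rewrite E; ring.
Qed.

Lemma point_supp_single x u : point K x -> (forall w, x w <> 0 -> w = u) -> x = vtx u.
Proof.
  intros P H. apply functional_extensionality. intros w. unfold vtx.
  destruct excluded_middle_informative as [->|Nw].
  - rewrite <- (point_sum P (NoDup_single u)); [simpl; ring|].
    intros w Hw. left. symmetry. auto.
  - apply NNPP; intro E. apply Nw. auto.
Qed.

Lemma bary_vtx x u : point K x -> bary x (vtx u) = x u.
Proof.
  intros P. destruct (supp_list_spec P) as [N H]. unfold bary.
  rewrite (lsum_indep (t:=[u])); auto using NoDup_single.
  - rewrite lsum_cons, lsum_nil, vtx_self. ring.
  - intros w Hw. apply H. intro E; apply Hw; rewrite E; ring.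
  - intros w Hw. apply vtx_supp_single. intro E; apply Hw; rewrite E; ring.
Qed.

End Points.

Lemma glb_exists (E : R -> Prop) :
  (exists L, E L) -> (forall L, E L -> 0 <= L) -> exists m, is_glb E m.
Proof.
  intros [L0 H0] Hp.
  destruct (completeness (fun t => E (- t))) as [m [Hu Hl]].
  - exists 0. intros t Ht. specialize (Hp _ Ht). lra.
  - exists (- L0). now rewrite Ropp_involutive.
  - exists (- m). split.
    + intros L HL. assert (- L <= m) by (apply Hu; now rewrite Ropp_involutive). lra.
    + intros b Hb. assert (m <= - b); [|lra].
      apply Hl. intros t Ht. specialize (Hb _ Ht). lra.
Qed.

Lemma glb_unique (E : R -> Prop) r1 r2 : is_glb E r1 -> is_glb E r2 -> r1 = r2.
Proof. intros [A1 B1] [A2 B2]. apply Rle_antisym; auto. Qed.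

Section Oscillation.
Variable V : Type.
Variable K : list V -> Prop.
Hypothesis HK : simplicial_complex K.

Lemma dsig_nonneg s (x z : V -> R) : 0 <= dsig s x z.
Proof.
  unfold dsig. apply Rmult_le_pos; [lra|]. apply lsum_nonneg; intros; apply Rabs_pos.
Qed.

Lemma dsig_sym s (x z : V -> R) : dsig s x z = dsig s z x.
Proof. unfold dsig. f_equal. apply lsum_ext. intros; apply Rabs_minus_sym. Qed.

(* If a and b have equal mass on s and g takes values in [c, c + M] on s, the
   averages of g under a and b differ by at most M times their l^1 distance;
   the sharp constant comes from centring g at the midpoint c + M/2. *)
Lemma lsum_osc_bound s (a b g : V -> R) c M :
  lsum s a = lsum s b -> (forall w, In w s -> c <= g w <= c + M) ->
  Rabs (lsum s (fun w => a w * g w) - lsum s (fun w => b w * g w)) <= M * dsig s a b.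
Proof.
  intros E H. set (m := c + M / 2).
  assert (Centre : lsum s (fun w => a w * g w) - lsum s (fun w => b w * g w) =
                   lsum s (fun w => (a w - b w) * (g w - m)) + m * (lsum s a - lsum s b)).
  { clear E H. induction s as [|u s IH]; [simpl; ring|]. rewrite !lsum_cons. lra. }
  rewrite Centre, E, Rminus_diag, Rmult_0_r, Rplus_0_r.
  eapply Rle_trans; [apply lsum_abs|].
  transitivity (lsum s (fun w => (M / 2) * Rabs (a w - b w))).
  - apply lsum_le. intros u Hu. rewrite Rabs_mult, Rmult_comm.
    apply Rmult_le_compat_r; [apply Rabs_pos|]. apply Rabs_le.
    specialize (H u Hu). unfold m. lra.
  - rewrite lsum_scal. unfold dsig. right. field.
Qed.

Lemma list_argmin s (g : V -> R) : s <> [] ->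
  exists w0, In w0 s /\ forall w, In w s -> g w0 <= g w.
Proof.
  induction s as [|a s IH]; intros H; [contradiction|].
  destruct s as [|b s'].
  - exists a. split; [left; auto|]. intros w [<-|[]]; lra.
  - destruct IH as [w0 [Hw0 Hm]]; [discriminate|].
    destruct (Rle_dec (g a) (g w0)).
    + exists a. split; [left; auto|]. intros w [<-|Hw]; [lra|]. specialize (Hm w Hw); lra.
    + exists w0. split; [right; auto|]. intros w [<-|Hw]; [lra|auto].
Qed.

Definition simplex_osc (g : V -> R) (M : R) : Prop :=
  forall s, K s -> forall w w', In w s -> In w' s -> g w <= g w' + M.

Lemma bary_step_lip x z s g M : K s -> NoDup s -> point K x -> point K z ->
  (forall u, x u <> 0 -> In u s) -> (forall u, z u <> 0 -> In u s) ->
  simplex_osc g M -> Rabs (bary x g - bary z g) <= M * dsig s x z.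
Proof.
  intros Ks N Px Pz Hx Hz Hg.
  rewrite (bary_lists HK g Px N Hx), (bary_lists HK g Pz N Hz).
  assert (Ne : s <> []).
  { intros ->. pose proof (point_sum HK Px N Hx). rewrite lsum_nil in H. lra. }
  destruct (list_argmin g Ne) as [w0 [Hw0 Hmin]].
  apply lsum_osc_bound with (c := g w0).
  - rewrite (point_sum HK Px N Hx), (point_sum HK Pz N Hz); auto.
  - intros w Hw. split; [auto|]. apply Hg with s; auto.
Qed.

Lemma bary_path_lip g M x y L : simplex_osc g M -> path_len K x y L ->
  Rabs (bary x g - bary y g) <= M * L.
Proof.
  intros Hg H. induction H as [x Px|x z y s L Ks N Px Pz Hx Hz _ IH].
  - rewrite Rminus_diag, Rabs_R0. lra.
  - pose proof (bary_step_lip Ks N Px Pz Hx Hz Hg).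
    replace (bary x g - bary y g) with ((bary x g - bary z g) + (bary z g - bary y g)) by ring.
    eapply Rle_trans; [apply Rabs_triang|]. rewrite Rmult_plus_distr_l. lra.
Qed.

Lemma bary_dX_lip g M x y r : 0 < M -> simplex_osc g M -> dX_is K x y r ->
  Rabs (bary x g - bary y g) <= M * r.
Proof.
  intros HM Hg [_ Hr].
  assert (Rabs (bary x g - bary y g) / M <= r).
  { apply Hr. intros L HL. pose proof (bary_path_lip Hg HL).
    apply (Rmult_le_reg_l M); auto.
    replace (M * (Rabs (bary x g - bary y g) / M)) with (Rabs (bary x g - bary y g)) by (field; lra).
    auto. }
  replace (Rabs (bary x g - bary y g)) with (M * (Rabs (bary x g - bary y g) / M)) by (field; lra).
  apply Rmult_le_compat_l; lra.
Qed.

End Oscillation.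

Section PathMetric.
Variable V : Type.
Variable K : list V -> Prop.
Hypothesis HK : simplicial_complex K.

Lemma path_nonneg x y L : path_len K x y L -> 0 <= L.
Proof. intros H; induction H; [lra|]. pose proof (dsig_nonneg s x z). lra. Qed.

Lemma path_concat x y z L1 L2 :
  path_len K x y L1 -> path_len K y z L2 -> path_len K x z (L1 + L2).
Proof.
  intros H; revert z L2; induction H; intros z' L2 H'.
  - now rewrite Rplus_0_l.
  - rewrite Rplus_assoc. eapply pl_cons; eauto.
Qed.

Lemma path_step x z s : K s -> NoDup s -> point K x -> point K z ->
  (forall u, x u <> 0 -> In u s) -> (forall u, z u <> 0 -> In u s) ->
  path_len K x z (dsig s x z).
Proof.
  intros. rewrite <- (Rplus_0_r (dsig s x z)). eapply pl_cons; eauto. now constructor.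
Qed.

Lemma path_rev x y L : path_len K x y L -> path_len K y x L.
Proof.
  intros H; induction H; [now constructor|].
  rewrite Rplus_comm. eapply path_concat; [eauto|]. rewrite dsig_sym. now apply path_step.
Qed.

Lemma path_to_vtx x u : point K x -> x u <> 0 -> exists L, path_len K x (vtx u) L.
Proof.
  intros P Hu. destruct (point_simplex HK P) as [s [Ks [N Hs]]].
  exists (dsig s x (vtx u)). apply path_step; auto.
  - apply (vtx_point HK).
  - intros w Hw. apply vtx_supp in Hw. subst; auto.
Qed.

Lemma walk_path u v n : walk K u v n -> exists L, path_len K (vtx u) (vtx v) L.
Proof.
  intros H; induction H as [u|u w v n [Nuw Kuw] _ [L HL]].
  - exists 0. constructor. now apply vtx_point.
  - exists (dsig [u; w] (vtx u) (vtx w) + L). pose proof (vtx_point HK).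
    eapply pl_cons; eauto.
    + constructor; [intros [E|[]]; auto|apply NoDup_single].
    + intros a Ha; apply vtx_supp in Ha; subst; simpl; auto.
    + intros a Ha; apply vtx_supp in Ha; subst; simpl; auto.
Qed.

Lemma dX_refl x : point K x -> dX_is K x x 0.
Proof.
  intros P. split; [intros L HL; eapply path_nonneg; eauto|].
  intros b Hb. apply Hb. now constructor.
Qed.

Lemma dX_sym x y r : dX_is K x y r -> dX_is K y x r.
Proof.
  intros [Hlow Hgreat]. split.
  - intros L HL; apply Hlow, path_rev, HL.
  - intros b Hb; apply Hgreat. intros L HL; apply Hb, path_rev, HL.
Qed.

Lemma dX_tri x y z p q r :
  dX_is K x y p -> dX_is K y z q -> dX_is K x z r -> r <= p + q.
Proof.
  intros [_ Bp] [_ Bq] [Ar _].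
  assert (H : forall L2, path_len K y z L2 -> r - L2 <= p).
  { intros L2 H2. apply Bp. intros L1 H1. pose proof (Ar _ (path_concat H1 H2)). lra. }
  assert (r - p <= q); [|lra].
  apply Bq. intros L2 H2. specialize (H _ H2). lra.
Qed.

(* d_X as a function: the infimum if it exists (it always does when the
   1-skeleton is connected), 0 otherwise. *)
Definition dX_val (x y : V -> R) : R :=
  match excluded_middle_informative (exists r, dX_is K x y r) with
  | left H => proj1_sig (constructive_indefinite_description _ H)
  | right _ => 0
  end.

Hypothesis Hconn : forall u v, exists n, walk K u v n.

(* In a connected complex any two points are joined: go to a vertex of each
   support and connect these vertices by a walk. *)
Lemma path_exists x y : point K x -> point K y -> exists L, path_len K x y L.
Proof.
  intros Px Py.
  destruct (point_supp_nonempty HK Px) as [u Hu].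
  destruct (point_supp_nonempty HK Py) as [v Hv].
  destruct (path_to_vtx u Px Hu) as [L1 H1].
  destruct (path_to_vtx v Py Hv) as [L3 H3].
  destruct (Hconn u v) as [n Hn]. destruct (walk_path Hn) as [L2 H2].
  exists (L1 + L2 + L3). eapply path_concat; [eapply path_concat; eauto|]. now apply path_rev.
Qed.

Lemma dX_val_spec x y : point K x -> point K y -> dX_is K x y (dX_val x y).
Proof.
  intros Px Py. unfold dX_val. destruct excluded_middle_informative as [H|H].
  - now destruct constructive_indefinite_description.
  - exfalso; apply H. apply glb_exists; [now apply path_exists|]. intros L; apply path_nonneg.
Qed.

Lemma dX_val_eq x y r : point K x -> point K y -> dX_is K x y r -> dX_val x y = r.
Proof. intros Px Py H. eapply glb_unique; [apply dX_val_spec|]; eauto. Qed.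

Lemma dX_val_nonneg x y : point K x -> point K y -> 0 <= dX_val x y.
Proof.
  intros Px Py. destruct (dX_val_spec Px Py) as [_ H]. apply H.
  intros L HL; eapply path_nonneg; eauto.
Qed.

(* Each coordinate is 1-Lipschitz for d_X, so d_X separates points. *)
Lemma dX_val_zero x y : point K x -> point K y -> dX_val x y = 0 -> x = y.
Proof.
  intros Px Py E. apply functional_extensionality. intros u.
  assert (Osc : simplex_osc K (vtx u) 1).
  { intros s _ w w' _ _. unfold vtx.
    do 2 destruct excluded_middle_informative; lra. }
  pose proof (bary_dX_lip HK Rlt_0_1 Osc (dX_val_spec Px Py)) as Lip.
  rewrite E, Rmult_0_r, !(bary_vtx HK) in Lip by assumption.
  pose proof (Rabs_pos (x u - y u)).
  destruct (Req_dec (x u - y u) 0) as [E0|E0]; [lra|].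
  apply Rabs_no_R0 in E0. lra.
Qed.

(* The indicator of supp(x) is 1-Lipschitz, so points with disjoint
   supports are at d_X-distance at least 1. *)
Lemma dX_val_disjoint x y : point K x -> point K y ->
  (forall u, x u <> 0 -> y u = 0) -> 1 <= dX_val x y.
Proof.
  intros Px Py Hd.
  set (g := fun w => if excluded_middle_informative (x w = 0) then 0 else 1).
  assert (Osc : simplex_osc K g 1).
  { intros s _ w w' _ _. unfold g. do 2 destruct excluded_middle_informative; lra. }
  pose proof (bary_dX_lip HK Rlt_0_1 Osc (dX_val_spec Px Py)) as Lip.
  assert (Gx : bary x g = 1).
  { destruct (supp_list_spec HK Px) as [N H]. rewrite <- (point_sum HK Px N H).
    apply lsum_ext; intros w _. unfold g.
    destruct excluded_middle_informative as [e|e]; [rewrite e|]; ring. }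
  assert (Gy : bary y g = 0).
  { apply lsum_zero. intros w _. unfold g.
    destruct excluded_middle_informative as [e|e]; [|rewrite (Hd w e)]; ring. }
  rewrite Gx, Gy, Rminus_0_r, Rabs_R1 in Lip. lra.
Qed.

Lemma dX_val_metric : is_metric (point K) dX_val.
Proof.
  split; [|split; [|split]].
  - exact dX_val_nonneg.
  - intros x y Px Py. split; [now apply dX_val_zero|].
    intros <-. now apply dX_val_eq, dX_refl.
  - intros x y Px Py. symmetry. apply dX_val_eq, dX_sym, dX_val_spec; auto.
  - intros x y z Px Py Pz. eapply dX_tri; apply dX_val_spec; eauto.
Qed.

End PathMetric.

Section BilinearExtension.
Variable V : Type.
Variable K : list V -> Prop.
Variable dh : V -> V -> R.
Hypothesis HK : simplicial_complex K.
Hypothesis Hm : is_metric (fun _ : V => True) dh.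

Lemma dh_nonneg u v : 0 <= dh u v.
Proof. now apply Hm. Qed.

Lemma dh_zero u v : dh u v = 0 -> u = v.
Proof. now apply Hm. Qed.

Lemma dh_refl u : dh u u = 0.
Proof. now apply Hm. Qed.

Lemma dh_sym u v : dh u v = dh v u.
Proof. now apply Hm. Qed.

Lemma dh_tri u v w : dh u w <= dh u v + dh v w.
Proof. now apply Hm. Qed.

Lemma Dhat_bary x y : Dhat dh x y = bary x (fun u => bary y (fun v => dh u v)).
Proof.
  unfold Dhat, bary. apply lsum_ext. intros u _.
  rewrite <- lsum_scal. apply lsum_ext; intros; ring.
Qed.

Lemma Dhat_sym x y : Dhat dh x y = Dhat dh y x.
Proof.
  unfold Dhat. rewrite lsum_swap.
  apply lsum_ext; intros; apply lsum_ext; intros. rewrite dh_sym; ring.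
Qed.

Lemma Dhat_nonneg x y : point K x -> point K y -> 0 <= Dhat dh x y.
Proof.
  intros Px Py. rewrite Dhat_bary, <- (bary_const HK 0 Px).
  apply (bary_le _ _ Px). intros u _.
  rewrite <- (bary_const HK 0 Py). apply (bary_le _ _ Py). intros v _. apply dh_nonneg.
Qed.

Lemma Dhat_vtx u v : Dhat dh (vtx u) (vtx v) = dh u v.
Proof. now rewrite Dhat_bary, !(bary_at_vtx HK). Qed.

(* Averaging dh(u,w) <= dh(u,v) + dh(v,w) over v ~ y, then over u ~ x and
   w ~ z, gives the triangle inequality. *)
Lemma Dhat_tri x y z : point K x -> point K y -> point K z ->
  Dhat dh x z <= Dhat dh x y + Dhat dh y z.
Proof.
  intros Px Py Pz.
  assert (Pointwise : forall u w,
    dh u w <= bary y (fun v => dh u v) + bary y (fun v => dh v w)).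
  { intros u w. rewrite <- bary_plus, <- (bary_const HK (dh u w) Py).
    apply (bary_le _ _ Py). intros v _. apply dh_tri. }
  rewrite (Dhat_bary x z), (Dhat_bary x y), (Dhat_sym y z), (Dhat_bary z y).
  rewrite <- (bary_const HK (bary z (fun w => bary y (fun v => dh w v))) Px), <- bary_plus.
  apply (bary_le _ _ Px). intros u _.
  rewrite <- (bary_const HK (bary y (fun v => dh u v)) Pz), <- bary_plus.
  apply (bary_le _ _ Pz). intros w _.
  rewrite (bary_ext y (fun v => dh w v) (fun v => dh v w)) by (intros; apply dh_sym).
  apply Pointwise.
Qed.

Lemma Dhat_zero x y : point K x -> point K y -> Dhat dh x y = 0 -> x = y.
Proof.
  intros Px Py E.
  assert (Same : forall u v, x u <> 0 -> y v <> 0 -> u = v).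
  { intros u v Hu Hv. rewrite Dhat_bary in E.
    assert (Nonneg : forall u, 0 <= bary y (fun v => dh u v)).
    { intros a. rewrite <- (bary_const HK 0 Py). apply (bary_le _ _ Py). intros; apply dh_nonneg. }
    pose proof (bary_zero_each HK _ Px Nonneg E u Hu) as Eu.
    apply dh_zero, (bary_zero_each HK _ Py (dh_nonneg u) Eu v Hv). }
  destruct (point_supp_nonempty HK Px) as [u0 Hu0].
  destruct (point_supp_nonempty HK Py) as [v0 Hv0].
  assert (u0 = v0) as <- by auto.
  rewrite (point_supp_single HK Px (u := u0)), (point_supp_single HK Py (u := u0)); auto.
  intros w Hw. symmetry. auto.
Qed.

End BilinearExtension.

Section DiameterBound.
Variable V : Type.
Variable K : list V -> Prop.
Variable dh : V -> V -> R.
Variable C : R.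
Hypothesis HK : simplicial_complex K.
Hypothesis Hm : is_metric (fun _ : V => True) dh.
Hypothesis HC : 0 < C.
Hypothesis Hdiam : forall s u v, K s -> In u s -> In v s -> dh u v <= C.

Lemma Dhat_osc x : point K x -> simplex_osc K (fun v => bary x (fun u => dh v u)) C.
Proof.
  intros P s Ks w w' Hw Hw'.
  rewrite <- (bary_const HK C P), <- bary_plus. apply (bary_le _ _ P). intros u _.
  pose proof (dh_tri Hm w w' u). pose proof (Hdiam w w' Ks Hw Hw'). lra.
Qed.

Lemma Dhat_lip x y z r : point K x -> dX_is K y z r ->
  Rabs (Dhat dh x y - Dhat dh x z) <= C * r.
Proof.
  intros Px H. rewrite (Dhat_sym Hm x y), (Dhat_sym Hm x z), !Dhat_bary.
  exact (bary_dX_lip HK HC (Dhat_osc Px) H).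
Qed.

(* A point lies in one simplex, so its self-distance is at most C. *)
Lemma Dhat_diag x : point K x -> Dhat dh x x <= C.
Proof.
  intros P. destruct (point_simplex HK P) as [s [Ks [_ Hs]]].
  rewrite Dhat_bary, <- (bary_const HK C P). apply (bary_le _ _ P). intros u Hu.
  rewrite <- (bary_const HK C P). apply (bary_le _ _ P). intros v Hv. eauto.
Qed.

Hypothesis Hconn : forall u v, exists n, walk K u v n.

(* Dhat x y <= Dhat x x + C d_X(x,y) <= C (1 + d_X(x,y)). *)
Lemma Dhat_le_dX x y : point K x -> point K y -> Dhat dh x y <= C * (1 + dX_val K x y).
Proof.
  intros Px Py.
  pose proof (Dhat_lip Px (dX_val_spec HK Hconn Px Py)) as Lip.
  rewrite Rabs_minus_sym in Lip. pose proof (Rle_abs (Dhat dh x y - Dhat dh x x)).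
  pose proof (Dhat_diag Px). lra.
Qed.

End DiameterBound.

Lemma min_metric (P : Type) (dom : P -> Prop) (D d : P -> P -> R) (L c : R) :
  is_metric dom d ->
  (forall x y, dom x -> dom y -> 0 <= D x y) ->
  (forall x y, dom x -> dom y -> D x y = 0 -> x = y) ->
  (forall x y, dom x -> dom y -> D x y = D y x) ->
  (forall x y z, dom x -> dom y -> dom z -> D x z <= D x y + D y z) ->
  (forall x y z, dom x -> dom y -> dom z -> D x z <= D x y + L * d y z) ->
  0 < c -> L <= c ->
  is_metric dom (fun x y => Rmin (D x y) (c * d x y)).
Proof.
  intros [d_nonneg [d_zero [d_sym d_tri]]] D_nonneg D_zero D_sym D_tri D_lip Hc HL.
  split; [|split; [|split]].
  - intros x y Px Py. apply Rmin_glb; auto. apply Rmult_le_pos; [lra|auto].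
  - intros x y Px Py. split.
    + unfold Rmin. destruct Rle_dec; intros E; [now apply D_zero|].
      apply d_zero; auto. destruct (Rmult_integral _ _ E); [lra|auto].
    + intros <-. rewrite (proj2 (d_zero x x Px Px) eq_refl), Rmult_0_r.
      pose proof (D_nonneg x x Px Px). unfold Rmin; destruct Rle_dec; lra.
  - intros x y Px Py. now rewrite D_sym, d_sym.
  - intros x y z Px Py Pz.
    pose proof (D_tri x y z Px Py Pz).
    pose proof (d_tri x y z Px Py Pz).
    pose proof (D_lip x y z Px Py Pz).
    pose proof (D_lip z y x Pz Py Px).
    rewrite (D_sym z x), (D_sym z y), (d_sym y x) in * by auto.
    pose proof (d_nonneg x y Px Py). pose proof (d_nonneg y z Py Pz).
    assert (c * d x z <= c * d x y + c * d y z) by nra.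
    assert (L * d y z <= c * d y z) by nra.
    assert (L * d x y <= c * d x y) by nra.
    unfold Rmin; repeat destruct Rle_dec; lra.
Qed.

Section Extension.
Variable V : Type.
Variable K : list V -> Prop.
Variable dh : V -> V -> R.
Variable C : R.
Hypothesis HK : simplicial_complex K.
Hypothesis Hm : is_metric (fun _ : V => True) dh.
Hypothesis HC : 0 < C.
Hypothesis Hdiam : forall s u v, K s -> In u s -> In v s -> dh u v <= C.
Hypothesis Hconn : forall u v, exists n, walk K u v n.

Definition dt (x y : V -> R) : R := Rmin (Dhat dh x y) (3 * C * dX_val K x y).

Lemma dt_metric : is_metric (point K) dt.
Proof.
  apply min_metric with (L := C); [apply (dX_val_metric HK Hconn)| | | | | |lra|lra].
  - intros x y Px Py. now apply (Dhat_nonneg HK Hm).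
  - intros x y Px Py. now apply (Dhat_zero HK Hm).
  - intros x y _ _. apply (Dhat_sym Hm).
  - intros x y z Px Py Pz. now apply (Dhat_tri HK Hm).
  - intros x y z Px Py Pz.
    pose proof (Dhat_lip HK Hm HC Hdiam Px (dX_val_spec HK Hconn Py Pz)) as Lip.
    pose proof (Rle_abs (Dhat dh x z - Dhat dh x y)). rewrite Rabs_minus_sym in Lip. lra.
Qed.

(* On points with disjoint supports d_X >= 1, so the truncation is inactive. *)
Lemma dt_disjoint x y : point K x -> point K y ->
  (forall u, x u <> 0 -> y u = 0) -> dt x y = Dhat dh x y.
Proof.
  intros Px Py Hd. apply Rmin_left.
  pose proof (dX_val_disjoint HK Hconn Px Py Hd).
  pose proof (Dhat_le_dX HK Hm HC Hdiam Hconn Px Py). nra.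
Qed.

(* dt extends dh: distinct vertices have disjoint supports. *)
Lemma dt_vtx u v : dt (vtx u) (vtx v) = dh u v.
Proof.
  pose proof (vtx_point HK) as Vtx.
  destruct (classic (u = v)) as [<-|Nuv].
  - rewrite (dh_refl Hm). now apply dt_metric.
  - rewrite dt_disjoint, (Dhat_vtx dh HK); auto.
    intros w Hw. apply vtx_supp in Hw. subst w. unfold vtx.
    destruct excluded_middle_informative; congruence.
Qed.

(* dt is within 2C of Dhat, since Dhat <= C + C d_X. *)
Lemma dt_bounds x y : point K x -> point K y ->
  Dhat dh x y - 2 * C <= dt x y /\ dt x y <= Dhat dh x y + 2 * C.
Proof.
  intros Px Py. unfold dt. split.
  - pose proof (Dhat_le_dX HK Hm HC Hdiam Hconn Px Py).
    pose proof (dX_val_nonneg HK Hconn Px Py).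
    apply Rmin_glb; nra.
  - pose proof (Rmin_l (Dhat dh x y) (3 * C * dX_val K x y)). lra.
Qed.

End Extension.

Lemma qi_connected (V : Type) (K : list V -> Prop) (dh : V -> V -> R) (A B : R) :
  (forall u v : V, exists n : nat, graph_dist K u v n /\
     / A * INR n - B <= dh u v /\ dh u v <= A * INR n + B) ->
  forall u v, exists n, walk K u v n.
Proof. intros HQ u v. destruct (HQ u v) as [n [[W _] _]]. eauto. Qed.

Lemma qi_simplex_diam (V : Type) (K : list V -> Prop) (dh : V -> V -> R) (A B : R) :
  simplicial_complex K -> is_metric (fun _ : V => True) dh -> 1 <= A -> 0 <= B ->
  (forall u v : V, exists n : nat, graph_dist K u v n /\
     / A * INR n - B <= dh u v /\ dh u v <= A * INR n + B) ->
  forall s u v, K s -> In u s -> In v s -> dh u v <= A + B.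
Proof.
  intros HK Hm HA HB HQ s u v Ks Hu Hv.
  destruct (classic (u = v)) as [<-|Nuv]; [rewrite (dh_refl Hm); lra|].
  destruct (HQ u v) as [n [[_ Hmin] [_ Hup]]].
  assert (Edge : walk K u v 1).
  { apply walk_cons with v; [|constructor]. split; auto.
    apply (proj2 HK s); auto. intros a [<-|[<-|[]]]; auto. }
  pose proof (le_INR _ _ (Hmin 1%nat Edge)) as Hn. simpl in Hn. nra.
Qed.

Theorem mainTheorem7 (V : Type) (K : list V -> Prop) (dh : V -> V -> R) (A B : R) :
  simplicial_complex K ->
  is_metric (fun _ : V => True) dh ->
  1 <= A -> 0 <= B ->
  (forall u v : V, exists n : nat, graph_dist K u v n /\
     / A * INR n - B <= dh u v /\ dh u v <= A * INR n + B) ->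
  exists dt : (V -> R) -> (V -> R) -> R,
    is_metric (point K) dt /\
    (forall u v : V, dt (vtx u) (vtx v) = dh u v) /\
    (forall x y r, point K x -> point K y -> dX_is K x y r ->
        dt x y = Rmin (Dhat dh x y) (3 * (A + B) * r)) /\
    (forall x y, point K x -> point K y ->
        (forall u, x u <> 0 -> y u = 0) -> dt x y = Dhat dh x y) /\
    (forall x y, point K x -> point K y ->
        Dhat dh x y - 2 * (A + B) <= dt x y /\ dt x y <= Dhat dh x y + 2 * (A + B)).
Proof.
  intros HK Hm HA HB HQ.
  assert (HC : 0 < A + B) by lra.
  pose proof (@qi_connected V K dh A B HQ) as Hconn.
  pose proof (qi_simplex_diam HK Hm HA HB HQ) as Hdiam.
  exists (dt K dh (A + B)). split; [|split; [|split; [|split]]].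
  - exact (dt_metric HK Hm HC Hdiam Hconn).
  - intros u v. exact (dt_vtx HK Hm HC Hdiam Hconn u v).
  - intros x y r Px Py Hr. unfold dt. now rewrite (dX_val_eq HK Hconn Px Py Hr).
  - intros x y Px Py Hd. exact (dt_disjoint HK Hm HC Hdiam Hconn Px Py Hd).
  - intros x y Px Py. exact (dt_bounds HK Hm HC Hdiam Hconn Px Py).
Qed.
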